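(* Fix $T>0$, $r,\nu,\mu\in\mathbb R$, $\eta>0$, $\sigma>0$, $\rho\in(-1,1)$, $s_0>0$, $\lambda>0$, and let $\delta=\nu-\eta\rho\frac{\mu-r}{\sigma}$. For $\gamma\in(0,+\infty)$ define $\bar\theta(\gamma)=\lambda\gamma(1-\rho^2)$, $\bar w(\gamma)=W\left(s_0\eta^2Te^{(\delta-\frac{\eta^2}{2})T}\bar\theta(\gamma)\right)$ and $$\bar d(\gamma)=\frac{\lambda e^{-rT}}{\bar\theta(\gamma)\eta^2T}\left(\bar w(\gamma)+\frac{\bar w(\gamma)^2}{2}\right),$$ where $W$ is the Lambert function. Then $\bar d$ is $C^1$ and strictly decreasing on $(0,+\infty)$, $$\lim_{\gamma\to0^+}\bar d(\gamma)=\lambda e^{-rT}s_0e^{(\delta-\frac{\eta^2}{2})T},\qquad\lim_{\gamma\to+\infty}\bar d(\gamma)=0,$$ and $\bar d$ is bounded.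
   Context: The Lambert function $W$ is the inverse of the bijection $x\in(-1,+\infty)\mapsto xe^x\in(-1/e,+\infty)$. The quantity $\bar d(\gamma)$ is the deterministic lower approximation of the asking reservation price of $\lambda$ units of a non-traded stock for an agent with exponential utility of risk aversion $\gamma$. *)

From HB Require Import structures.
From mathcomp Require Import all_boot all_order all_algebra.
From mathcomp Require Import all_classical all_reals all_analysis.
Set Implicit Arguments. Unset Strict Implicit. Unset Printing Implicit Defensive.
Import Order.TTheory GRing.Theory Num.Theory.
Import numFieldNormedType.Exports.
Local Open Scope classical_set_scope.
Local Open Scope ring_scope.

(* For y > -1/e, lambertW y is the unique x > -1 with x e^x = y
   (outside that range the value is an unspecified junk value). *)
Definition lambertW (R : realType) (y : R) : R :=
  get [set x : R | -1 < x /\ x * expR x = y].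

Definition delta_par (R : realType) (r nu mu eta sigma rho : R) : R :=
  nu - eta * rho * ((mu - r) / sigma).

Definition theta_bar (R : realType) (lam rho gam : R) : R :=
  lam * gam * (1 - rho ^+ 2).

Definition w_bar (R : realType) (T r nu mu eta sigma rho s0 lam gam : R) : R :=
  lambertW (s0 * eta ^+ 2 * T
            * expR ((delta_par r nu mu eta sigma rho - eta ^+ 2 / 2) * T)
            * theta_bar lam rho gam).

Definition d_bar (R : realType) (T r nu mu eta sigma rho s0 lam gam : R) : R :=
  let w := w_bar T r nu mu eta sigma rho s0 lam gam in
  lam * expR (- r * T) / (theta_bar lam rho gam * eta ^+ 2 * T)
  * (w + w ^+ 2 / 2).

From HB Require Import structures.
From mathcomp Require Import all_boot all_order all_algebra.
From mathcomp Require Import all_classical all_reals all_analysis.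
From mathcomp Require Import ring lra.
Set Implicit Arguments.
Unset Strict Implicit.
Unset Printing Implicit Defensive.
Import Order.TTheory GRing.Theory Num.Theory.
Import numFieldNormedType.Exports.
Local Open Scope classical_set_scope.
Local Open Scope ring_scope.

(* With E := e^((delta - eta^2/2) T), a := s0 eta^2 T E lam (1 - rho^2) and
   A := lam e^(-rT) s0 E we have w_bar(gamma) = W(a gamma) =: w, and w e^w = a gamma
   gives theta_bar(gamma) eta^2 T = w e^w / (s0 E), hence
     d_bar(gamma) = A (1 + w/2) e^(-w).
   On (0, +oo), W increases from 0 to +oo while w |-> (1 + w/2) e^(-w) decreases
   from 1 to 0; this gives monotonicity, both limits and 0 < d_bar < A.  Since
   W' = 1 / (e^W (1 + W)), the chain rule collapses to
   d_bar'(gamma) = - (a A / 2) e^(-2 W(a gamma)), which is continuous because W is. *)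

Section LambertDecay.
Variable R : realType.
Implicit Types p q v w x y : R.

Lemma ltr_mulexpR {v w} : 0 <= v -> v < w -> v * expR v < w * expR w.
Proof. by move=> v0 vw; rewrite ltr_pM ?expR_ge0 ?ltr_expR. Qed.

Lemma continuous_mulexpR : continuous (fun w : R => w * expR w).
Proof. by move=> x; apply: continuousM; [exact: cvg_id | exact: continuous_expR]. Qed.

Global Instance is_derive_mulexpR x :
  is_derive x 1 (fun w : R => w * expR w) (expR x * (1 + x)).
Proof.
have dM : is_derive x 1 (id * expR) (x *: expR x + expR x *: 1) by apply: is_deriveM.
apply: (is_derive_eq (f := fun w => w * expR w) dM).
by rewrite /GRing.scale /=; ring.
Qed.

Lemma lambertW_spec y : 0 < y -> 0 < lambertW y /\ lambertW y * expR (lambertW y) = y.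
Proof.
move=> y0; have yle : y <= y * expR y by rewrite ler_peMr ?(ltW y0) // ltW // pexpR_gt1.
have [|w /itvP w0y wy] := @IVT R (fun w => w * expR w) 0 y y (ltW y0)
    (continuous_subspaceT continuous_mulexpR).
  by rewrite mul0r ge_min le_max (ltW y0) yle orbT.
have /getPex[_ WK] : exists x : R, -1 < x /\ x * expR x = y.
  by exists w; split=> //; rewrite (@lt_le_trans _ _ 0) ?w0y // ltrN10.
split=> //; rewrite -(pmulr_lgt0 _ (expR_gt0 (lambertW y))).
by rewrite /lambertW WK.
Qed.

Lemma lambertW_gt0 {y} : 0 < y -> 0 < lambertW y.
Proof. by case/lambertW_spec. Qed.

Lemma lambertWK {y} : 0 < y -> lambertW y * expR (lambertW y) = y.
Proof. by case/lambertW_spec. Qed.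

Lemma mulexpRK {w} : 0 < w -> lambertW (w * expR w) = w.
Proof.
move=> w0; have wew0 : 0 < w * expR w by rewrite mulr_gt0 ?expR_gt0.
have W0 := lambertW_gt0 wew0; have WK := lambertWK wew0.
case: (ltgtP (lambertW (w * expR w)) w) => // [Ww|Ww].
- by have := ltr_mulexpR (ltW W0) Ww; rewrite WK ltxx.
- by have := ltr_mulexpR (ltW w0) Ww; rewrite WK ltxx.
Qed.

Lemma ltr_lambertW y1 y2 : 0 < y1 -> y1 < y2 -> lambertW y1 < lambertW y2.
Proof.
move=> y10 y12; have y20 := lt_trans y10 y12.
rewrite ltNge; apply: contraTN y12 => W21; rewrite -leNgt.
rewrite -(lambertWK y10) -(lambertWK y20).
by rewrite ler_pM ?ler_expR ?expR_ge0 // ltW // lambertW_gt0.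
Qed.

Lemma mulexpRK_near {y} : 0 < y ->
  {near lambertW y, cancel (fun w => w * expR w) (@lambertW R)}.
Proof.
move=> y0; near=> w; apply: mulexpRK; near: w; apply: lt_nbhsr; exact: lambertW_gt0.
Unshelve. all: by end_near. Qed.

Lemma continuous_lambertW y : 0 < y -> {for y, continuous (@lambertW R)}.
Proof.
move=> y0; have : {near lambertW y, continuous (fun w => w * expR w)}.
  by near=> w; exact: continuous_mulexpR.
move/(near_can_continuous (mulexpRK_near y0)).
by rewrite (lambertWK y0); apply: nbhs_singleton.
Unshelve. all: by end_near. Qed.

Lemma is_derive_lambertW {y} : 0 < y ->
  is_derive y 1 (@lambertW R) (expR (lambertW y) * (1 + lambertW y))^-1.
Proof.
move=> y0; have : {near lambertW y, continuous (fun w => w * expR w)}.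
  by near=> w; exact: continuous_mulexpR.
move/(is_derive_inverse (mulexpRK_near y0))/(_ (is_derive_mulexpR _)).
rewrite (lambertWK y0); apply.
by rewrite mulf_neq0 ?expR_eq0 // gt_eqF // ltr_wpDr // ltW // lambertW_gt0.
Unshelve. all: by end_near. Qed.

Lemma lambertW_cvg0 : @lambertW R y @[y --> 0^'+] --> 0.
Proof.
apply/cvgrPdist_lt => e e0; near=> y.
have y0 : 0 < y by near: y; exact: nbhs_right_gt.
rewrite sub0r normrN gtr0_norm ?lambertW_gt0 // -[ltRHS](mulexpRK e0).
apply: ltr_lambertW => //; near: y; apply: nbhs_right_lt.
by rewrite mulr_gt0 ?expR_gt0.
Unshelve. all: by end_near. Qed.

Lemma lambertW_cvgy : @lambertW R y @[y --> +oo] --> +oo.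
Proof.
apply/cvgryPgt => M; pose m := Num.max M 1.
have m0 : 0 < m by rewrite lt_max ltr01 orbT.
near=> y; apply: (@le_lt_trans _ _ m); first by rewrite le_max lexx.
rewrite -[m in m < _](mulexpRK m0).
apply: ltr_lambertW; first by rewrite mulr_gt0 ?expR_gt0.
by near: y; apply: nbhs_pinfty_gt; exact: num_real.
Unshelve. all: by end_near. Qed.

Definition lambert_decay w := (1 + w / 2) * expR (- w).

Lemma lambert_decay0 : lambert_decay 0 = 1.
Proof. by rewrite /lambert_decay mul0r addr0 oppr0 expR0 mulr1. Qed.

Lemma lambert_decay_gt0 w : 0 <= w -> 0 < lambert_decay w.
Proof. by move=> w0; rewrite mulr_gt0 ?expR_gt0 // ltr_wpDr ?divr_ge0. Qed.

Lemma ltr_lambert_decay p q : 0 <= p -> p < q -> lambert_decay q < lambert_decay p.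
Proof.
move=> p0 pq; rewrite /lambert_decay.
have -> : expR (- q) = expR (- p) * expR (- (q - p)) by rewrite -expRD; congr expR; ring.
rewrite mulrCA mulrC ltr_pM2r ?expR_gt0 // expRN mulrC ltr_pdivrMl ?expR_gt0 //.
have := expR_ge1Dx (q - p); nra.
Qed.

Global Instance is_derive_lambert_decay w :
  is_derive w 1 lambert_decay (- (1 + w) / 2 * expR (- w)).
Proof. by apply: is_derive_eq; rewrite /GRing.scale /=; field. Qed.

Lemma continuous_lambert_decay : continuous lambert_decay.
Proof.
move=> w; apply/differentiable_continuous/derivable1_diffP.
by case: (is_derive_lambert_decay w).
Qed.

Lemma lambert_decay_le_inv {w} : 0 <= w -> lambert_decay w <= (1 + w / 2)^-1.
Proof.
move=> w0; have w20 : 0 < 1 + w / 2 by rewrite ltr_wpDr ?divr_ge0.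
rewrite /lambert_decay.
have -> : expR (- w) = (expR (w / 2) ^+ 2)^-1.
  by rewrite -expRM_natl expRN; congr (expR _)^-1; field.
rewrite ler_pdivrMr ?exprn_gt0 ?expR_gt0 // ler_pdivlMl // -expr2.
by rewrite lerXn2r ?nnegrE ?(ltW w20) ?expR_ge0 // expR_ge1Dx.
Qed.

Lemma lambert_decay_cvgy : lambert_decay w @[w --> +oo] --> 0.
Proof.
apply/cvgrPdist_lt => e e0; near=> w.
have w0 : 0 < w by near: w; exact: nbhs_pinfty_gt.
rewrite sub0r normrN gtr0_norm ?lambert_decay_gt0 ?ltW //.
rewrite (le_lt_trans (lambert_decay_le_inv (ltW w0))) //.
have w2e : 2 / e < w by near: w; apply: nbhs_pinfty_gt; exact: num_real.
have w20 : 0 < 1 + w / 2 by rewrite ltr_wpDr ?divr_ge0 ?ltW.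
rewrite invf_plt ?posrE //; lra.
Unshelve. all: by end_near. Qed.

Lemma cvg_scale_at_right0 (a : R) : 0 < a -> a * x @[x --> 0^'+] --> 0^'+.
Proof.
move=> a0 P /= [e /= e0 eP].
exists (e / a) => /=; first by rewrite divr_gt0.
move=> x /= xe x0; apply: eP; last by rewrite mulr_gt0.
rewrite /ball /= sub0r normrN gtr0_norm ?mulr_gt0 // -ltr_pdivlMl //.
by move: xe; rewrite /ball /= sub0r normrN gtr0_norm // mulrC.
Qed.

Lemma cvg_scale_pinfty (a : R) : 0 < a -> a * x @[x --> +oo] --> +oo.
Proof.
move=> a0; apply/cvgryPgt => M; near=> x.
rewrite -ltr_pdivrMl //; near: x; apply: nbhs_pinfty_gt; exact: num_real.
Unshelve. all: by end_near. Qed.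

Lemma is_derive_decay_lambertW y : 0 < y ->
  is_derive y 1 (lambert_decay \o @lambertW R) (- expR (- lambertW y) ^+ 2 / 2).
Proof.
move=> y0; have W0 := lambertW_gt0 y0.
move: (is_derive1_comp (is_derive_lambert_decay _) (is_derive_lambertW y0)).
move/is_derive_eq; apply.
rewrite expRN; field.
by rewrite expR_eq0 /= gt_eqF // ltr_wpDr ?ltW.
Qed.

Section ScaledDecay.
Variables (A a : R).
Hypotheses (A0 : 0 < A) (a0 : 0 < a).

Local Notation F := (fun g : R => A * lambert_decay (lambertW (a * g))).
Local Notation dF := (fun g : R => - (A * a) / 2 * expR (- lambertW (a * g)) ^+ 2).

Lemma is_derive_scaled_decay (g : R) : 0 < g -> is_derive g 1 F (dF g).
Proof.
move=> g0; have ag0 : 0 < a * g by rewrite mulr_gt0.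
have da : is_derive g 1 ( *%R a) a by apply: is_derive_eq; rewrite /GRing.scale /= mulr1.
have := is_derive1_comp (is_derive_decay_lambertW ag0) da.
move/(is_deriveZ A)/is_derive_eq; apply; rewrite /GRing.scale /=; ring.
Qed.

Lemma continuous_scaled_decay_derive (g : R) : 0 < g -> {for g, continuous dF}.
Proof.
move=> g0; have W_cont : lambertW (a * x) @[x --> g] --> lambertW (a * g).
  apply: continuous_comp (continuous_lambertW (mulr_gt0 a0 g0)).
  by apply: cvgM; [exact: cvg_cst | exact: cvg_id].
have E_cont : expR (- lambertW (a * x)) @[x --> g] --> expR (- lambertW (a * g)).
  by apply: continuous_comp; [exact: cvgN | exact: continuous_expR].
apply: cvgM; first exact: cvg_cst.
exact: continuous_comp E_cont (@exprn_continuous R 2 _).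
Qed.

Lemma ltr_scaled_decay (g1 g2 : R) : 0 < g1 -> g1 < g2 -> F g2 < F g1.
Proof.
move=> g10 g12; rewrite ltr_pM2l // ltr_lambert_decay ?ltW ?lambertW_gt0 ?mulr_gt0 //.
by rewrite ltr_lambertW ?mulr_gt0 ?ltr_pM2l.
Qed.

Lemma scaled_decay_bound (g : R) : 0 < g -> 0 < F g < A.
Proof.
move=> g0; have W0 : 0 < lambertW (a * g) by rewrite lambertW_gt0 ?mulr_gt0.
rewrite mulr_gt0 ?lambert_decay_gt0 ?ltW //= -[ltRHS]mulr1 ltr_pM2l //.
by rewrite -lambert_decay0 ltr_lambert_decay.
Qed.

Lemma scaled_decay_cvg0 : F g @[g --> 0^'+] --> A.
Proof.
rewrite -[X in _ --> X]mulr1 -lambert_decay0; apply: cvgM; first exact: cvg_cst.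
apply: continuous_cvg; first exact: continuous_lambert_decay.
exact: cvg_comp (cvg_scale_at_right0 a0) lambertW_cvg0.
Qed.

Lemma scaled_decay_cvgy : F g @[g --> +oo] --> 0.
Proof.
rewrite -(mulr0 A); apply: cvgM; first exact: cvg_cst.
apply: cvg_comp lambert_decay_cvgy.
exact: cvg_comp (cvg_scale_pinfty a0) lambertW_cvgy.
Qed.

End ScaledDecay.

End LambertDecay.

Lemma d_bar_lambert_decay (R : realType) (T r nu mu eta sigma rho s0 lam g : R) :
  0 < T -> 0 < eta -> 0 < s0 -> 0 < lam -> 0 < 1 - rho ^+ 2 -> 0 < g ->
  let E := expR ((delta_par r nu mu eta sigma rho - eta ^+ 2 / 2) * T) in
  d_bar T r nu mu eta sigma rho s0 lam g =
  lam * expR (- r * T) * s0 * E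
  * lambert_decay (lambertW (s0 * eta ^+ 2 * T * E * (lam * (1 - rho ^+ 2)) * g)).
Proof.
move=> T0 eta0 s00 lam0 rho2 g0 E; have E0 : 0 < E by exact: expR_gt0.
rewrite /d_bar /w_bar /theta_bar -/E.
have -> : s0 * eta ^+ 2 * T * E * (lam * g * (1 - rho ^+ 2)) =
          s0 * eta ^+ 2 * T * E * (lam * (1 - rho ^+ 2)) * g by ring.
set w := lambertW _.
have [w0 wK] : 0 < w /\ w * expR w = s0 * eta ^+ 2 * T * E * (lam * (1 - rho ^+ 2)) * g.
  by rewrite lambertW_gt0 ?lambertWK // !mulr_gt0 // exprn_gt0.
have -> : lam * g * (1 - rho ^+ 2) * eta ^+ 2 * T = w * expR w / (s0 * E).
  by rewrite wK; field; rewrite !gt_eqF.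
by rewrite /lambert_decay expRN; field; rewrite !gt_eqF ?expR_gt0.
Qed.

Theorem proposition3 (R : realType) (T r nu mu eta sigma rho s0 lam : R)
  (hT : 0 < T) (heta : 0 < eta) (hsigma : 0 < sigma)
  (hrho : -1 < rho < 1) (hs0 : 0 < s0) (hlam : 0 < lam) :
  let d := d_bar T r nu mu eta sigma rho s0 lam in
  let delta := delta_par r nu mu eta sigma rho in
  (* d is C^1 on (0, +oo) *)
  {in `]0, +oo[, forall g, derivable d g 1} /\
  {in `]0, +oo[, continuous (derive1 d)} /\
  (* d is strictly decreasing on (0, +oo) *)
  {in `]0, +oo[ &, forall g1 g2, g1 < g2 -> d g2 < d g1} /\
  (* limits at 0+ and +oo *)
  d g @[g --> 0^'+] --> lam * expR (- r * T) * s0 * expR ((delta - eta ^+ 2 / 2) * T) /\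
  d g @[g --> +oo] --> 0 /\
  (* d is bounded on (0, +oo) *)
  (exists M : R, forall g, 0 < g -> `|d g| <= M).
Proof.
move=> d delta.
have rho2 : 0 < 1 - rho ^+ 2 by case/andP: hrho => ? ?; rewrite subr_gt0 expr2; nra.
set E := expR ((delta - eta ^+ 2 / 2) * T).
set A := lam * expR (- r * T) * s0 * E.
set a := s0 * eta ^+ 2 * T * E * (lam * (1 - rho ^+ 2)).
have A0 : 0 < A by rewrite !mulr_gt0 ?expR_gt0.
have a0 : 0 < a by rewrite !mulr_gt0 ?expR_gt0 ?exprn_gt0.
have dE (g : R) : 0 < g -> d g = A * lambert_decay (lambertW (a * g)).
  exact: d_bar_lambert_decay.
have d_derive (g : R) : 0 < g ->
    is_derive g 1 d (- (A * a) / 2 * expR (- lambertW (a * g)) ^+ 2).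
  move=> g0; apply: (near_eq_is_derive _ (is_derive_scaled_decay A a0 g0)).
  by near=> x; rewrite dE //; near: x; exact: lt_nbhsr.
split; [|split; [|split; [|split; [|split]]]].
- by move=> g; rewrite in_itv /= andbT => /d_derive[].
- move=> g; rewrite in_itv /= andbT => g0.
  have d'E : \forall x \near g, - (A * a) / 2 * expR (- lambertW (a * x)) ^+ 2 = derive1 d x.
    near=> x; have x0 : 0 < x by near: x; exact: lt_nbhsr.
    by rewrite derive1E; case: (d_derive x x0).
  rewrite /continuous_at -(nbhs_singleton d'E).
  exact: cvg_trans (near_eq_cvg d'E) (continuous_scaled_decay_derive a0 g0).
- move=> g1 g2; rewrite !in_itv /= !andbT => g10 g20 g12.
  by rewrite !dE // ltr_scaled_decay.
- apply: cvg_trans _ (scaled_decay_cvg0 a0); apply: near_eq_cvg.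
  by near=> g; rewrite dE //; near: g; exact: nbhs_right_gt.
- apply: cvg_trans _ (scaled_decay_cvgy A a0); apply: near_eq_cvg.
  by near=> g; rewrite dE //; near: g; apply: nbhs_pinfty_gt; exact: num_real.
- exists A => g g0; rewrite dE //.
  by have /andP[F0 FA] := scaled_decay_bound A0 a0 g0; rewrite gtr0_norm // ltW.
Unshelve. all: by end_near.
Qed.
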